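(* Let $A,B \in\mathbb{C}^{n\times n}$. If $A\leq^{GD1}B$, then $A\leq^{D,-}B$.
   Context: For $A\in\mathbb{C}^{n\times n}$, $ind(A)$ is the smallest nonnegative integer $k$ with $\mathrm{rank}(A^k)=\mathrm{rank}(A^{k+1})$. $A\{1\}$ is the set of matrices $X$ with $AXA=A$. With $k=ind(A)$, $A\{GD\}$ is the set of matrices $X$ with $AXA=A$, $XA^{k+1}=A^k$, $A^{k+1}X=A^k$ (G-Drazin inverses). The Drazin inverse $A^D$ is the unique $X$ with $XAX=X$, $XA=AX$, $XA^{k+1}=A^k$. A GD1 inverse of $A$ is a matrix $A^{GD1}=A^{GD}AA^-$ with $A^-\in A\{1\}$, $A^{GD}\in A\{GD\}$. We write $A\leq^{GD1}B$ if $AA^{GD1}=BA^{GD1}$ and $A^{GD1}A=A^{GD1}B$ for some GD1 inverse $A^{GD1}$ of $A$. For $A^-\in A\{1\}$, the D1 inverse is $A^{D,-}=A^DAA^-$; we write $A\leq^{D,-}B$ if $A^{D,-}A=A^{D,-}B$ and $AA^{D,-}=BA^{D,-}$ for some D1 inverse $A^{D,-}$ of $A$ (i.e. for some $A^-\in A\{1\}$). *)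

From HB Require Import structures.
From mathcomp Require Import all_boot all_order all_algebra.
From mathcomp Require Import complex.
Set Implicit Arguments. Unset Strict Implicit. Unset Printing Implicit Defensive.
Import Order.TTheory GRing.Theory Num.Theory.
Local Open Scope ring_scope.

(* Complex n x n matrices: entries in R[i] = complex R for R a real closed field
   (with R the reals this is C). *)

Section GD.
Variable F : fieldType.
Variable n : nat.
Implicit Types A B X : 'M[F]_n.

Definition mxpow A (k : nat) : 'M[F]_n := iter k (mulmx A) 1%:M.

Definition is_index A (k : nat) : Prop :=
  \rank (mxpow A k) = \rank (mxpow A k.+1) /\
  forall j, (j < k)%N -> \rank (mxpow A j) <> \rank (mxpow A j.+1).

Definition inner_inv A X : Prop := A *m X *m A = A.

Definition GD_inv A X : Prop :=
  forall k, is_index A k ->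
    [/\ A *m X *m A = A,
        X *m mxpow A k.+1 = mxpow A k &
        mxpow A k.+1 *m X = mxpow A k].

Definition Drazin_inv A X : Prop :=
  forall k, is_index A k ->
    [/\ X *m A *m X = X, X *m A = A *m X & X *m mxpow A k.+1 = mxpow A k].

Definition GD1_le A B : Prop :=
  exists Xgd X1, GD_inv A Xgd /\ inner_inv A X1 /\
    let G := Xgd *m A *m X1 in
    A *m G = B *m G /\ G *m A = G *m B.

Definition D1_le A B : Prop :=
  exists XD X1, Drazin_inv A XD /\ inner_inv A X1 /\
    let G := XD *m A *m X1 in
    G *m A = G *m B /\ A *m G = B *m G.

End GD.

From HB Require Import structures.
From mathcomp Require Import all_boot all_order all_algebra.
From mathcomp Require Import complex.
Set Implicit Arguments. Unset Strict Implicit. Unset Printing Implicit Defensive.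
Local Open Scope ring_scope.

(* If X is a G-Drazin inverse of A and k = ind(A), then A^D = X^(k+1) A^k
   = A^k X^(k+1), and A^D is absorbed by X from both sides:
   A^D A X = A^D = X A A^D.  The GD1 equations for G = X A A^- amount to
   X A = X A A^- B and B X A = A, and plugging these into A^D A A^- through
   the absorption identities yields the D1 equations. *)

Section MatrixPowers.
Variables (F : fieldType) (n : nat).
Implicit Types A : 'M[F]_n.

Lemma mxpowS A i : mxpow A i.+1 = A *m mxpow A i.
Proof. by []. Qed.

Lemma mxpowD A i j : mxpow A (i + j) = mxpow A i *m mxpow A j.
Proof. by elim: i => [|i IHi]; rewrite ?mul1mx // addSn !mxpowS IHi mulmxA. Qed.

Lemma mxpowSr A i : mxpow A i.+1 = mxpow A i *m A.
Proof. by rewrite -addn1 mxpowD /= mulmx1. Qed.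

Lemma mxrank_mxpowS A i : (\rank (mxpow A i.+1) <= \rank (mxpow A i))%N.
Proof. by rewrite mxpowSr mxrankM_maxl. Qed.

Lemma mxrank_mxpow_stable A : exists k, \rank (mxpow A k) = \rank (mxpow A k.+1).
Proof.
suff [//|] : (exists k, \rank (mxpow A k) = \rank (mxpow A k.+1))
             \/ (\rank (mxpow A n.+1) + n.+1 <= n)%N.
  by rewrite addnS ltnNge leq_addl.
elim: n.+1 => [|j [|IHj]]; [by right; rewrite addn0 mxrank1 | by left |].
have [eq_rank | ne_rank] := eqVneq (\rank (mxpow A j)) (\rank (mxpow A j.+1)).
  by left; exists j.
right; apply: leq_trans IHj; rewrite addnS -addSn leq_add2r ltn_neqAle.
by rewrite eq_sym ne_rank mxrank_mxpowS.
Qed.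

Lemma index_exists A : exists k, is_index A k.
Proof.
have [k eq_k] := mxrank_mxpow_stable A.
have ex_stable : exists k, \rank (mxpow A k) == \rank (mxpow A k.+1).
  by exists k; apply/eqP.
case: (ex_minnP ex_stable) => m /eqP eq_m min_m; exists m; split=> // j ltjm.
by move/eqP/min_m; rewrite leqNgt ltjm.
Qed.

Lemma index_uniq A k k' : is_index A k -> is_index A k' -> k = k'.
Proof.
move=> [eq_k min_k] [eq_k' min_k']; case: (ltngtP k k') => // lt_kk'.
- by case: (min_k' k lt_kk' eq_k).
- by case: (min_k k' lt_kk' eq_k').
Qed.

End MatrixPowers.

Section DrazinFromGDrazin.
Variables (F : fieldType) (n : nat) (A X : 'M[F]_n) (k : nat).
Hypotheses (XAk : X *m mxpow A k.+1 = mxpow A k)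
           (AkX : mxpow A k.+1 *m X = mxpow A k).

Lemma GD_mul_pow i : (k <= i)%N -> X *m mxpow A i.+1 = mxpow A i.
Proof. by move/subnKC <-; rewrite -addSn !mxpowD mulmxA XAk. Qed.

Lemma pow_mul_GD i : (k <= i)%N -> mxpow A i.+1 *m X = mxpow A i.
Proof. by move/subnK <-; rewrite -addnS !mxpowD -mulmxA AkX. Qed.

Lemma mxpowGD_cancell j i : (k <= i)%N -> mxpow X j *m mxpow A (j + i) = mxpow A i.
Proof.
move=> le_ki; elim: j => [|j IHj]; first by rewrite mul1mx.
rewrite mxpowSr -mulmxA addSn GD_mul_pow ?IHj //.
exact: leq_trans le_ki (leq_addl j i).
Qed.

Lemma mxpowGD_cancelr j i : (k <= i)%N -> mxpow A (i + j) *m mxpow X j = mxpow A i.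
Proof.
move=> le_ki; elim: j => [|j IHj]; first by rewrite mulmx1 addn0.
rewrite mxpowS mulmxA addnS pow_mul_GD ?IHj //.
exact: leq_trans le_ki (leq_addr j i).
Qed.

Definition GD_drazin := mxpow X k.+1 *m mxpow A k.

Lemma GD_drazinE : GD_drazin = mxpow A k *m mxpow X k.+1.
Proof.
rewrite /GD_drazin -{1}(mxpowGD_cancelr k.+1 (leqnn k)) mulmxA addnC.
by rewrite mxpowGD_cancell.
Qed.

Lemma GD_drazin_mulApow : GD_drazin *m mxpow A k.+1 = mxpow A k.
Proof. by rewrite -mulmxA -mxpowD addnC mxpowGD_cancell. Qed.

Lemma GD_drazin_mulA : GD_drazin *m A = mxpow X k.+1 *m mxpow A k.+1.
Proof. by rewrite -mulmxA -mxpowSr. Qed.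

Lemma GD_drazin_comm : GD_drazin *m A = A *m GD_drazin.
Proof.
rewrite GD_drazin_mulA GD_drazinE mulmxA -mxpowS.
by rewrite -{1}(mxpowGD_cancelr k.+1 (leqnSn k)) mulmxA mxpowGD_cancell.
Qed.

Lemma GD_drazin_outer : GD_drazin *m A *m GD_drazin = GD_drazin.
Proof.
rewrite GD_drazin_mulA {1}GD_drazinE -mulmxA (mulmxA (mxpow A k.+1)) -mxpowD.
by rewrite addnC mxpowGD_cancelr.
Qed.

Lemma GD_drazin_mulAX : GD_drazin *m A *m X = GD_drazin.
Proof. by rewrite GD_drazin_mulA -mulmxA AkX. Qed.

Lemma GD_drazin_mulXA : X *m A *m GD_drazin = GD_drazin.
Proof. by rewrite GD_drazinE !mulmxA -(mulmxA X) -mxpowS XAk. Qed.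

Lemma Drazin_inv_GD_drazin : is_index A k -> Drazin_inv A GD_drazin.
Proof.
move=> idx_k k' /(index_uniq idx_k) <-.
by split; [exact: GD_drazin_outer | exact: GD_drazin_comm | exact: GD_drazin_mulApow].
Qed.

End DrazinFromGDrazin.

Lemma D1_eqs_of_GD1_eqs (F : fieldType) (n : nat) (A B X X1 D : 'M[F]_n) :
    A *m X *m A = A -> A *m X1 *m A = A ->
    D *m A *m X = D -> X *m A *m D = D ->
    A *m (X *m A *m X1) = B *m (X *m A *m X1) ->
    X *m A *m X1 *m A = X *m A *m X1 *m B ->
  D *m A *m X1 *m A = D *m A *m X1 *m B /\ A *m (D *m A *m X1) = B *m (D *m A *m X1).
Proof.
move=> AXA AX1A DAX XAD AG GA.
have XA_eq : X *m A = X *m A *m X1 *m B.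
  by rewrite -GA -!mulmxA (mulmxA A X1) AX1A.
have BXA : B *m X *m A = A.
  move: (congr1 (mulmx^~ A) AG) => /=.
  by rewrite -!mulmxA (mulmxA A X1) AX1A !mulmxA AXA => /esym.
split.
- rewrite -!mulmxA (mulmxA A X1) AX1A -{1}DAX -(mulmxA _ X A) XA_eq.
  by rewrite !mulmxA DAX.
- by rewrite !mulmxA -[in RHS]XAD !mulmxA BXA.
Qed.

Theorem proposition2p12 (R : rcfType) (n : nat) (A B : 'M[R[i]]_n) :
  GD1_le A B -> D1_le A B.
Proof.
move=> [X [X1 [GD_X [inner_X1 [AG GA]]]]].
have [k idx_k] := index_exists A.
have [AXA XAk AkX] := GD_X k idx_k.
exists (GD_drazin A X k), X1; split; first exact: Drazin_inv_GD_drazin XAk AkX idx_k.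
split=> //; apply: D1_eqs_of_GD1_eqs AXA inner_X1 _ _ AG GA.
- exact: GD_drazin_mulAX AkX.
- exact: GD_drazin_mulXA XAk AkX.
Qed.
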